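(* For every integer $k\geq 3$, there is a deterministic distributed dynamic data structure for $k$-clique membership listing which handles edge insertions and deletions in $O(1)$ amortized rounds.
   Context: Highly dynamic network model: a synchronous network on a fixed set $V$ of $n$ nodes with unique identifiers starts as the empty graph; at the beginning of round $i$ the graph is $G_i=(V,E_i)$, obtained from the previous graph by an adversary inserting and/or deleting an arbitrary (unbounded) set of edges. At the start of each round every node is notified only of the insertions/deletions of edges incident to it; then each node may send a message of $O(\log n)$ bits to each of its current neighbors. A distributed dynamic data structure consists of a local part $DS_v$ at each node $v$; at the end of every round, $DS_v$ may be queried and must answer immediately, without any further communication, either with a correct answer to the query or with $\texttt{inconsistent}$. The amortized round complexity is at most $c$ if for every round $i$, the number of rounds up to round $i$ in which at least one node $v$ has $DS_v$ in an inconsistent state, divided by the total number of topology changes that occurred up to round $i$, is at most $c$. $k$-clique membership listing: $DS_v$ at each node $v$ must respond at the end of round $i$ to a query consisting of a $k$-element node set $\{v_1,\dots,v_k\}$ containing $v$ with $\texttt{true}$ if it forms a $k$-clique in $G_i$, $\texttt{false}$ if it does not, or $\texttt{inconsistent}$. *)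

From mathcomp Require Import all_boot.
Set Implicit Arguments.
Unset Strict Implicit.
Unset Printing Implicit Defensive.

(* A dynamic graph on the node set 'I_n (node identifiers 0..n-1):
   E i is the adjacency relation of G_i; G_0 is the empty graph. *)
Definition dyn_graph (n : nat) := nat -> rel 'I_n.

Definition valid_dyn_graph (n : nat) (E : dyn_graph n) : Prop :=
  (forall u w, E 0 u w = false) /\
  (forall i, symmetric (E i)) /\ (forall i, irreflexive (E i)).

Definition changes (n : nat) (E : dyn_graph n) (i : nat) : nat :=
  #|[set e : 'I_n * 'I_n | (e.1 < e.2) && (E i.-1 e.1 e.2 != E i e.1 e.2)]|.

Definition total_changes (n : nat) (E : dyn_graph n) (i : nat) : nat :=
  \sum_(1 <= j < i.+1) changes E j.

(* Each node v starts in state [init v]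
   (so it knows its identifier).  In round i, each node is first notified of
   the sets of inserted and deleted incident edges (given by the other
   endpoint), then sends [send s u] to each current neighbour u, then updates
   its state from the messages received from its current neighbours.  At the
   end of the round, [answer s Q] answers a query Q locally:
   Some true / Some false, or None = "inconsistent". *)
Record dyn_alg (n B : nat) := DynAlg {
  state : Type;
  init : 'I_n -> state;
  notify : state -> {set 'I_n} -> {set 'I_n} -> state;
  send : state -> 'I_n -> seq bool;
  send_bound : forall s u, size (send s u) <= B;
  recv : state -> ('I_n -> option (seq bool)) -> state;
  answer : state -> {set 'I_n} -> option bool
}.

Fixpoint exec (n B : nat) (A : dyn_alg n B) (E : dyn_graph n) (i : nat)
  : 'I_n -> state A :=
  match i with
  | 0 => init A
  | j.+1 =>
      let prev := exec A E j in
      let s1 := fun v => notify (prev v)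
                  [set u | E j.+1 v u && ~~ E j v u]
                  [set u | ~~ E j.+1 v u && E j v u] in
      fun v => recv (s1 v)
                 (fun u => if E j.+1 u v then Some (send (s1 u) v) else None)
  end.

Definition is_clique (n : nat) (G : rel 'I_n) (Q : {set 'I_n}) : bool :=
  [forall u in Q, forall w in Q, (u != w) ==> G u w].

Definition round_inconsistent (n B k : nat) (A : dyn_alg n B) (E : dyn_graph n)
  (i : nat) : bool :=
  [exists v : 'I_n, exists Q : {set 'I_n},
     (v \in Q) && (#|Q| == k) && (answer (exec A E i v) Q == None)].

Definition inconsistent_rounds (n B k : nat) (A : dyn_alg n B) (E : dyn_graph n)
  (i : nat) : nat :=
  \sum_(1 <= j < i.+1) (round_inconsistent k A E j : nat).

Definition kclique_correct (n B k : nat) (A : dyn_alg n B) (E : dyn_graph n) : Prop :=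
  forall (i : nat) (v : 'I_n) (Q : {set 'I_n}) (b : bool),
    v \in Q -> #|Q| = k -> answer (exec A E i v) Q = Some b ->
    b = is_clique (E i) Q.

(* Every node v keeps its neighbourhood, a view of the adjacency among its
   neighbours and, for every neighbour b, a queue of nodes y whose adjacency
   to v it still owes b.  A change of an edge {v, y} is queued at v for all
   neighbours as an event, and a neighbour b receiving that event queues its
   own adjacency to y for v in return.  Each round a node sends each neighbour
   one queue entry, events first, in O(log n) bits.  Invariantly, for any two
   neighbours x, w of v, either v's view of {x, w} is right or an entry
   settling it is still queued at v, x or w; a node answers only when its own
   queues are empty and no neighbour signalled a non-empty queue for it, so
   every answer is correct.  Per round every queue gains at most the number
   of topology changes and loses one entry, so the potential
   (longest queue) + 2 (longest event queue) pays for every inconsistent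
   round, at most three of them per change. *)

From mathcomp Require Import all_boot zify.
Set Implicit Arguments.
Unset Strict Implicit.
Unset Printing Implicit Defensive.

Fixpoint bits_of (L y : nat) : seq bool :=
  if L is L'.+1 then odd y :: bits_of L' y./2 else [::].

Fixpoint nat_of_bits (s : seq bool) : nat :=
  if s is b :: s' then b + (nat_of_bits s').*2 else 0.

Lemma size_bits_of L y : size (bits_of L y) = L.
Proof. by elim: L y => //= L IH y; rewrite IH. Qed.

Lemma bits_ofK L y : y < 2 ^ L -> nat_of_bits (bits_of L y) = y.
Proof.
elim: L y => [|L IH] y /=; first by rewrite expn0 ltnS leqn0 => /eqP->.
by move=> hy; rewrite IH ?odd_double_half // ltn_half_double -mul2n -expnS.
Qed.

Arguments bits_of : simpl never.
Arguments nat_of_bits : simpl never.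

Lemma is_clique_at n (G : rel 'I_n) (Q : {set 'I_n}) v :
  symmetric G -> v \in Q ->
  is_clique G Q =
    [forall u in Q, (u != v) ==> G v u] &&
    [forall x in Q, forall w in Q, [&& x != v, w != v & x != w] ==> G x w].
Proof.
move=> Gsym vQ; rewrite /is_clique.
apply/forall_inP/andP => [cl | [/forall_inP adj_v /forall_inP adj_Q]].
  split; apply/forall_inP => x xQ.
    by apply/implyP => xv; move/forall_inP: (cl v vQ) => /(_ x xQ); rewrite eq_sym xv.
  apply/forall_inP => w wQ; apply/implyP => /and3P [_ _ xw].
  by move/forall_inP: (cl x xQ) => /(_ w wQ); rewrite xw.
move=> x xQ; apply/forall_inP => w wQ; apply/implyP => xw.
have [xv | xv] := eqVneq x v.
  by subst x; move/implyP: (adj_v w wQ); apply; rewrite eq_sym.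
have [wv | wv] := eqVneq w v.
  by subst w; rewrite Gsym; move/implyP: (adj_v x xQ); apply.
by move/forall_inP: (adj_Q x xQ) => /(_ w wQ); rewrite xv wv xw.
Qed.

(* P + 2 Q grows by less than 3 c in a round with c > 0 changes, and a
   change-free round can only be bad if it decreases P + 2 Q. *)
Lemma potential_bound (c P Q : nat -> nat) (bad : nat -> bool) :
  P 0 = 0 -> Q 0 = 0 ->
  (forall t, Q t.+1 <= (Q t + c t.+1).-1) ->
  (forall t, P t.+1 <= (P t + c t.+1).-1 + (0 < Q t + c t.+1)) ->
  (forall t, bad t.+1 -> 0 < P t.+1) ->
  forall t, \sum_(1 <= j < t.+1) bad j + (P t + 2 * Q t) <= 3 * \sum_(1 <= j < t.+1) c j.
Proof.
move=> P0 Q0 Q_succ P_succ bad_P; elim=> [|t IH]; first by rewrite !big_geq // P0 Q0.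
rewrite !(big_nat_recr t.+1) //=.
have := P_succ t; have := Q_succ t; have := bad_P t.
by case: (bad t.+1); case: (ltnP 0 (Q t + c t.+1)) => /=; lia.
Qed.

(* [pending s b] holds the nodes y whose adjacency to [self s] is still to be
   reported to the neighbour b; its subset [events s b] holds those y for which
   the edge {self s, y} itself changed, which b answers with its own adjacency
   to y.  [events_sent] records that an event went out in the last round, and
   [more_heard] that some neighbour still had several entries queued for this
   node. *)
Record node_state (n : nat) := NodeState {
  self : 'I_n;
  nbrs : {set 'I_n};
  view : 'I_n -> 'I_n -> bool;
  pending : 'I_n -> {set 'I_n};
  events : 'I_n -> {set 'I_n};
  events_sent : bool;
  more_heard : bool }.

Section Protocol.
Variable n : nat.
Implicit Types (s : node_state n) (b y : 'I_n).

Definition next_report s b : option 'I_n :=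
  if events s b != set0 then [pick y in events s b] else [pick y in pending s b].

Definition reported s b : {set 'I_n} :=
  if next_report s b is Some y then [set y] else set0.

(* More entries queued; some entry reported; it is an event; the reported node
   is adjacent; then the reported node in binary. *)
Definition report s b : seq bool :=
  [:: 1 < #|pending s b|; isSome (next_report s b); events s b != set0;
      if next_report s b is Some y then y \in nbrs s else false]
  ++ bits_of (trunc_log 2 n).+1 (if next_report s b is Some y then val y else 0).

Definition msg_subject (m : option (seq bool)) : option 'I_n :=
  if m is Some (_ :: true :: _ :: _ :: code) then insub (nat_of_bits code) else None.

Definition msg_event (m : option (seq bool)) : bool :=
  if m is Some (_ :: _ :: ev :: _) then ev else false.

Definition msg_adjacent (m : option (seq bool)) : bool :=
  if m is Some (_ :: _ :: _ :: adj :: _) then adj else false.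

Definition msg_more (m : option (seq bool)) : bool :=
  if m is Some (more :: _) then more else false.

Definition requested (m : option (seq bool)) : {set 'I_n} :=
  if msg_event m then (if msg_subject m is Some y then [set y] else set0) else set0.

Definition init_state (v : 'I_n) : node_state n :=
  NodeState v set0 (fun _ _ => false) (fun _ => set0) (fun _ => set0) false false.

Definition notify_state s (ins del : {set 'I_n}) : node_state n :=
  let N := (nbrs s :|: ins) :\: del in
  let queue (old : 'I_n -> {set 'I_n}) b :=
    if b \in N then old b :|: ((ins :|: del) :\ b) else set0 in
  NodeState (self s) N (view s) (queue (pending s)) (queue (events s))
    (events_sent s) (more_heard s).

Definition receive s (msgs : 'I_n -> option (seq bool)) : node_state n :=
  NodeState (self s) (nbrs s)
    (fun x w => if msg_subject (msgs x) == Some w then msg_adjacent (msgs x)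
                else if msg_subject (msgs w) == Some x then msg_adjacent (msgs w)
                else view s x w)
    (fun b => if b \in nbrs s then (pending s b :\: reported s b) :|: requested (msgs b)
              else set0)
    (fun b => if b \in nbrs s then events s b :\: reported s b else set0)
    [exists b in nbrs s, events s b != set0]
    [exists u, msg_more (msgs u)].

Lemma pending_receive s msgs b : pending (receive s msgs) b =
  if b \in nbrs s then (pending s b :\: reported s b) :|: requested (msgs b) else set0.
Proof. by []. Qed.

Lemma events_receive s msgs b : events (receive s msgs) b =
  if b \in nbrs s then events s b :\: reported s b else set0.
Proof. by []. Qed.

Lemma view_receive s msgs x w : view (receive s msgs) x w =
  if msg_subject (msgs x) == Some w then msg_adjacent (msgs x)
  else if msg_subject (msgs w) == Some x then msg_adjacent (msgs w)
  else view s x w.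
Proof. by []. Qed.

(* A node cannot see the queues its neighbours keep for it, but by
   [pending_signalled] every non-empty one is flagged by [events_sent] or
   [more_heard]. *)
Definition clean s : bool :=
  ~~ [|| events_sent s, more_heard s | [exists b in nbrs s, pending s b != set0]].

Definition clique_answer s (Q : {set 'I_n}) : option bool :=
  if clean s then
    Some ([forall u in Q, (u != self s) ==> (u \in nbrs s)] &&
          [forall x in Q, forall w in Q, [&& x != self s, w != self s & x != w] ==> view s x w])
  else None.

Lemma size_report s b : size (report s b) <= 5 * (trunc_log 2 n).+1.
Proof. rewrite size_cat size_bits_of /=; lia. Qed.

Definition clique_alg : dyn_alg n (5 * (trunc_log 2 n).+1) :=
  DynAlg init_state notify_state size_report receive clique_answer.

Lemma msg_subject_report s b : msg_subject (Some (report s b)) = next_report s b.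
Proof.
rewrite /report /msg_subject /=; case: (next_report s b) => [y|] //=.
by rewrite bits_ofK ?valK //; exact: ltn_trans (ltn_ord y) (trunc_log_ltn _ _).
Qed.

Lemma msg_adjacent_report s b :
  msg_adjacent (Some (report s b)) = if next_report s b is Some y then y \in nbrs s else false.
Proof. by rewrite /report /msg_adjacent /=; case: (next_report s b). Qed.

Lemma msg_more_report s b : msg_more (Some (report s b)) = (1 < #|pending s b|).
Proof. by []. Qed.

Lemma requested_report s b :
  requested (Some (report s b)) = if events s b != set0 then reported s b else set0.
Proof. by rewrite /requested msg_subject_report. Qed.

Lemma next_reportP s b y : events s b \subset pending s b -> next_report s b = Some y ->
  y \in pending s b /\ (events s b != set0 -> y \in events s b).
Proof.
move=> sub; rewrite /next_report; case: ifP => ev0.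
  by case: pickP => // z zev [<-]; split => //; apply: (subsetP sub).
by case: pickP => // z zp [<-].
Qed.

Lemma next_report_None s b : events s b \subset pending s b -> next_report s b = None ->
  pending s b = set0.
Proof.
move=> sub; rewrite /next_report; case: ifP => ev0; case: pickP => // none _.
  by case/set0Pn: ev0 => z zev; move: (none z); rewrite /= zev.
by apply/setP => z; move: (none z); rewrite /= inE => ->.
Qed.

Lemma card_pending_reported s b : events s b \subset pending s b ->
  #|pending s b :\: reported s b| = #|pending s b|.-1.
Proof.
move=> sub; rewrite /reported; case rep: (next_report s b) => [y|].
  by have [yp _] := next_reportP sub rep; rewrite (cardsD1 y (pending s b)) yp.
by rewrite (next_report_None sub rep) set0D cards0.
Qed.

Lemma card_events_reported s b : events s b \subset pending s b ->
  #|events s b :\: reported s b| = #|events s b|.-1.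
Proof.
move=> sub; have [-> | ev0] := eqVneq (events s b) set0; first by rewrite set0D cards0.
rewrite /reported; case rep: (next_report s b) => [y|].
  by have [_ /(_ ev0) yev] := next_reportP sub rep; rewrite (cardsD1 y (events s b)) yev.
case/set0Pn: ev0 => z /(subsetP sub); by rewrite (next_report_None sub rep) inE.
Qed.

Lemma notin_reported s b y : next_report s b != Some y -> y \notin reported s b.
Proof.
rewrite /reported; case: next_report => [z zy|]; rewrite inE //.
by apply/eqP => yz; move: zy; rewrite yz eqxx.
Qed.

End Protocol.

Section Execution.
Variables (n : nat) (E : dyn_graph n).
Hypothesis HE : valid_dyn_graph E.

Lemma adj_sym t : symmetric (E t). Proof. exact: HE.2.1. Qed.

Lemma adj_neq t a b : E t a b -> a != b.
Proof. by apply: contraTneq => ->; rewrite HE.2.2. Qed.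

Definition changed t v : {set 'I_n} := [set u | E t.+1 v u != E t v u].

Lemma card_changed t v : #|changed t v| <= changes E t.+1.
Proof.
pose edge (u : 'I_n) := if v < u then (v, u) else (u, v).
have edge_inj : injective edge.
  by move=> u u'; rewrite /edge; case: ifP; case: ifP => _ _ [] // -> ->.
rewrite -(card_imset (mem (changed t v)) edge_inj); apply: subset_leq_card.
apply/subsetP => _ /imsetP [u + ->]; rewrite !inE /edge => uv_changed.
have uv : val u != val v.
  by apply: contraTneq uv_changed => /val_inj ->; rewrite !HE.2.2.
case: ifP => [vu | /negbT]; first by rewrite vu eq_sym.
by rewrite -leqNgt leq_eqVlt (negPf uv) /= => -> /=; rewrite !(adj_sym _ u) eq_sym.
Qed.

Definition state_at t : 'I_n -> node_state n := exec (clique_alg n) E t.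

Definition notified t v : node_state n :=
  notify_state (state_at t v)
    [set u | E t.+1 v u && ~~ E t v u] [set u | ~~ E t.+1 v u && E t v u].

Definition msg_at t u v : option (seq bool) :=
  if E t.+1 u v then Some (report (notified t u) v) else None.

Lemma state_at_succ t v : state_at t.+1 v = receive (notified t v) (msg_at t ^~ v).
Proof. by []. Qed.

Lemma msg_at_adj t u v : E t.+1 u v -> msg_at t u v = Some (report (notified t u) v).
Proof. by rewrite /msg_at => ->. Qed.

Lemma self_state_at t v : self (state_at t v) = v.
Proof. by elim: t. Qed.

Lemma nbrs_state_at t v : nbrs (state_at t v) = [set u | E t v u].
Proof.
elim: t v => [|t IH] v; apply/setP => u; first by rewrite !inE HE.1.
by rewrite state_at_succ /= IH !inE; case: (E t.+1 v u); case: (E t v u).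
Qed.

Lemma nbrs_notified t v : nbrs (notified t v) = [set u | E t.+1 v u].
Proof. exact: nbrs_state_at t.+1 v. Qed.

Lemma changed_split t v :
  [set u | E t.+1 v u & ~~ E t v u] :|: [set u | ~~ E t.+1 v u & E t v u] = changed t v.
Proof. by apply/setP => u; rewrite !inE; case: (E t.+1 v u); case: (E t v u). Qed.

Lemma pending_notified t v b : pending (notified t v) b =
  if E t.+1 v b then pending (state_at t v) b :|: (changed t v :\ b) else set0.
Proof.
have := nbrs_notified t v; rewrite /notified /notify_state /= => ->.
by rewrite inE changed_split.
Qed.

Lemma events_notified t v b : events (notified t v) b =
  if E t.+1 v b then events (state_at t v) b :|: (changed t v :\ b) else set0.
Proof.
have := nbrs_notified t v; rewrite /notified /notify_state /= => ->.
by rewrite inE changed_split.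
Qed.

Lemma pending_succ t v b : pending (state_at t.+1 v) b =
  if E t.+1 v b then (pending (notified t v) b :\: reported (notified t v) b) :|:
                     requested n (msg_at t b v)
  else set0.
Proof. by rewrite state_at_succ pending_receive nbrs_notified inE. Qed.

Lemma events_succ t v b : events (state_at t.+1 v) b =
  if E t.+1 v b then events (notified t v) b :\: reported (notified t v) b else set0.
Proof. by rewrite state_at_succ events_receive nbrs_notified inE. Qed.

Lemma events_sub_pending t v b : events (state_at t v) b \subset pending (state_at t v) b.
Proof.
elim: t v b => [|t IH] v b; first exact: sub0set.
rewrite pending_succ events_succ; case: (E t.+1 v b); last exact: sub0set.
apply: subset_trans (subsetUl _ _); apply: setSD.
by rewrite pending_notified events_notified; case: ifP => // _; apply: setSU.
Qed.

Lemma events_sub_pending_notified t v b :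
  events (notified t v) b \subset pending (notified t v) b.
Proof.
rewrite pending_notified events_notified; case: ifP => // _.
exact/setSU/events_sub_pending.
Qed.

Lemma mem_pending_notified t a b y : E t.+1 a b ->
  (y \in pending (notified t a) b) =
  (y \in pending (state_at t a) b) || (y != b) && (E t.+1 a y != E t a y).
Proof. by move=> ab; rewrite pending_notified ab !inE. Qed.

Lemma mem_events_notified t a b y : E t.+1 a b ->
  (y \in events (notified t a) b) =
  (y \in events (state_at t a) b) || (y != b) && (E t.+1 a y != E t a y).
Proof. by move=> ab; rewrite events_notified ab !inE. Qed.

Lemma pending_kept t a b y : E t.+1 a b ->
  y \in pending (notified t a) b -> next_report (notified t a) b != Some y ->
  y \in pending (state_at t.+1 a) b.
Proof.
move=> ab yp /notin_reported yrep.
by rewrite pending_succ ab; apply/setUP; left; rewrite inE yrep.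
Qed.

Lemma event_kept_or_answered t a b y : E t.+1 a b -> y \in events (notified t a) b ->
  y \in events (state_at t.+1 a) b \/ y \in pending (state_at t.+1 b) a.
Proof.
move=> ab yev.
have [rep | /notin_reported yrep] := eqVneq (next_report (notified t a) b) (Some y).
  right; rewrite pending_succ adj_sym ab (msg_at_adj ab) requested_report.
  have -> : events (notified t a) b != set0 by apply/set0Pn; exists y.
  by rewrite /reported rep; apply/setUP; right; rewrite inE.
by left; rewrite events_succ ab inE yrep.
Qed.

Lemma view_succ t v x w : E t.+1 v x -> E t.+1 v w ->
  view (state_at t.+1 v) x w =
  if (next_report (notified t x) v == Some w) || (next_report (notified t w) v == Some x)
  then E t.+1 x w else view (state_at t v) x w.
Proof.
move=> vx vw; have xv : E t.+1 x v by rewrite adj_sym.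
have wv : E t.+1 w v by rewrite adj_sym.
rewrite state_at_succ view_receive (msg_at_adj xv) (msg_at_adj wv).
rewrite !msg_subject_report !msg_adjacent_report.
case: eqP => [-> | _]; first by rewrite nbrs_notified inE.
by case: eqP => [-> | _] //; rewrite nbrs_notified inE adj_sym.
Qed.

(* Either v's view of {x, w} is right, or a report settling it is on its way:
   x or w still owes v its adjacency to the other, or v still has to announce
   one of them to the other as an event. *)
Definition view_settled t v x w : Prop :=
  view (state_at t v) x w = E t x w \/ w \in pending (state_at t x) v \/
  x \in pending (state_at t w) v \/ x \in events (state_at t v) w \/
  w \in events (state_at t v) x.

Lemma view_settledP t v x w : E t v x -> E t v w -> x != w -> view_settled t v x w.
Proof.
elim: t v x w => [|t IH] v x w; first by rewrite HE.1.
move=> vx vw xw; have xv : E t.+1 x v by rewrite adj_sym.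
have wv : E t.+1 w v by rewrite adj_sym.
have settle_x : x \in events (notified t v) w -> view_settled t.+1 v x w.
  by case/(event_kept_or_answered vw) => ?; [do 3 right; left | right; right; left].
have settle_w : w \in events (notified t v) x -> view_settled t.+1 v x w.
  by case/(event_kept_or_answered vx) => ?; [do 4 right | right; left].
have [reported_now | /norP [x_rep w_rep]] := boolP
  ((next_report (notified t x) v == Some w) || (next_report (notified t w) v == Some x)).
  by left; rewrite view_succ // reported_now.
have [xw_changed | /negPn/eqP xw_same] := boolP (E t.+1 x w != E t x w).
  right; left; apply: pending_kept => //.
  by rewrite mem_pending_notified // xw_changed (adj_neq wv) orbT.
have [vx_old | vx_new] := boolP (E t v x); last first.
  by apply: settle_x; rewrite mem_events_notified // xw vx (negPf vx_new) orbT.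
have [vw_old | vw_new] := boolP (E t v w); last first.
  by apply: settle_w; rewrite mem_events_notified // eq_sym xw vw (negPf vw_new) orbT.
case: (IH v x w vx_old vw_old xw) => [view_ok | [h | [h | [h | h]]]].
- by left; rewrite view_succ // (negPf x_rep) (negPf w_rep) view_ok xw_same.
- by right; left; apply: pending_kept => //; rewrite mem_pending_notified // h.
- by right; right; left; apply: pending_kept => //; rewrite mem_pending_notified // h.
- by apply: settle_x; rewrite mem_events_notified // h.
- by apply: settle_w; rewrite mem_events_notified // h.
Qed.

Lemma pending_signalled t x v : E t.+1 x v -> pending (state_at t.+1 x) v != set0 ->
  more_heard (state_at t.+1 v) || events_sent (state_at t.+1 v).
Proof.
move=> xv; rewrite pending_succ xv => /set0Pn [y /setUP [left_over | requested_y]].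
  apply/orP; left; rewrite state_at_succ; apply/existsP; exists x.
  rewrite (msg_at_adj xv) msg_more_report.
  have : 0 < #|pending (notified t x) v :\: reported (notified t x) v|.
    by apply/card_gt0P; exists y.
  by rewrite card_pending_reported ?events_sub_pending_notified //; lia.
have vx : E t.+1 v x by rewrite adj_sym.
apply/orP; right; rewrite state_at_succ; apply/existsP; exists x.
rewrite nbrs_notified inE vx andTb; apply: contraTneq requested_y => ev0.
by rewrite (msg_at_adj vx) requested_report ev0 eqxx inE.
Qed.

Lemma clean_view_correct t v x w : clean (state_at t v) ->
  E t v x -> E t v w -> x != w -> view (state_at t v) x w = E t x w.
Proof.
case: t => [|t]; first by rewrite HE.1.
rewrite /clean !negb_or => /and3P [no_ev no_more /existsPn no_pending] vx vw xw.
have own_empty b : E t.+1 v b -> pending (state_at t.+1 v) b = set0.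
  by move=> vb; apply/eqP; move: (no_pending b); rewrite nbrs_state_at inE vb negbK.
have nbr_empty a : E t.+1 v a -> pending (state_at t.+1 a) v = set0.
  move=> va; apply/eqP; move: no_more; apply: contraNT => a_pending.
  have av : E t.+1 a v by rewrite adj_sym.
  by move: (pending_signalled av a_pending); rewrite (negPf no_ev) orbF.
case: (view_settledP vx vw xw) => [// | [h | [h | [h | h]]]].
- by rewrite nbr_empty ?inE in h.
- by rewrite nbr_empty ?inE in h.
- by move: (subsetP (events_sub_pending _ _ _) _ h); rewrite own_empty ?inE.
- by move: (subsetP (events_sub_pending _ _ _) _ h); rewrite own_empty ?inE.
Qed.

Lemma clique_answer_correct t v (Q : {set 'I_n}) (b : bool) : v \in Q ->
  clique_answer (state_at t v) Q = Some b -> b = is_clique (E t) Q.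
Proof.
rewrite /clique_answer => vQ; case: ifP => // cl [<-].
rewrite (is_clique_at (adj_sym t) vQ) self_state_at.
have -> : [forall u in Q, (u != v) ==> (u \in nbrs (state_at t v))] =
          [forall u in Q, (u != v) ==> E t v u].
  by apply: eq_forallb => u; rewrite nbrs_state_at inE.
case: (boolP [forall u in Q, _]) => [/forall_inP adj_v | _] //=.
apply: eq_forallb_in => x xQ; apply: eq_forallb_in => w wQ.
case: and3P => // [[xv wv xw]].
rewrite clean_view_correct //.
  exact: (implyP (adj_v x xQ)).
exact: (implyP (adj_v w wQ)).
Qed.

Lemma card_setU_changed t a b (X : {set 'I_n}) :
  #|X :|: (changed t a :\ b)| <= #|X| + changes E t.+1.
Proof.
apply: leq_trans (leq_card_setU _ _).1 _; rewrite leq_add2l.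
exact: leq_trans (subset_leq_card (subsetDl _ _)) (card_changed t a).
Qed.

Lemma card_events_succ t a b :
  #|events (state_at t.+1 a) b| <= (#|events (state_at t a) b| + changes E t.+1).-1.
Proof.
rewrite events_succ; case: ifP => ab; last by rewrite cards0.
rewrite card_events_reported ?events_sub_pending_notified // events_notified ab.
by rewrite -!subn1 leq_sub2r // card_setU_changed.
Qed.

Lemma card_pending_succ t a b :
  #|pending (state_at t.+1 a) b| <=
  (#|pending (state_at t a) b| + changes E t.+1).-1 + (events (notified t b) a != set0).
Proof.
rewrite pending_succ; case: ifP => ab; last by rewrite cards0.
apply: leq_trans (leq_card_setU _ _).1 _; apply: leq_add.
  rewrite card_pending_reported ?events_sub_pending_notified // pending_notified ab.
  by rewrite -!subn1 leq_sub2r // card_setU_changed.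
have ba : E t.+1 b a by rewrite adj_sym.
rewrite (msg_at_adj ba) requested_report; case: ifP => _; last by rewrite cards0.
by rewrite /reported; case: next_report => [y|]; rewrite ?cards1 ?cards0.
Qed.

Lemma events_notified_gt0 t b a : events (notified t b) a != set0 ->
  0 < #|events (state_at t b) a| + changes E t.+1.
Proof.
rewrite -card_gt0 events_notified; case: ifP => _; last by rewrite cards0.
by move/leq_trans; apply; apply: card_setU_changed.
Qed.

Definition max_pending t := \max_(p : 'I_n * 'I_n) #|pending (state_at t p.1) p.2|.
Definition max_events t := \max_(p : 'I_n * 'I_n) #|events (state_at t p.1) p.2|.

Lemma leq_max_pending t a b : #|pending (state_at t a) b| <= max_pending t.
Proof.
exact: (@leq_bigmax _ (fun p : 'I_n * 'I_n => #|pending (state_at t p.1) p.2|) (a, b)).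
Qed.

Lemma leq_max_events t a b : #|events (state_at t a) b| <= max_events t.
Proof.
exact: (@leq_bigmax _ (fun p : 'I_n * 'I_n => #|events (state_at t p.1) p.2|) (a, b)).
Qed.

Lemma max_pending0 : max_pending 0 = 0.
Proof. by apply/eqP; rewrite -leqn0; apply/bigmax_leqP => p _ /=; rewrite cards0. Qed.

Lemma max_events0 : max_events 0 = 0.
Proof. by apply/eqP; rewrite -leqn0; apply/bigmax_leqP => p _ /=; rewrite cards0. Qed.

Lemma max_events_succ t : max_events t.+1 <= (max_events t + changes E t.+1).-1.
Proof.
apply/bigmax_leqP => [[a b]] _; apply: leq_trans (card_events_succ t a b) _.
by rewrite -!subn1 leq_sub2r // leq_add2r leq_max_events.
Qed.

Lemma max_pending_succ t : max_pending t.+1 <=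
  (max_pending t + changes E t.+1).-1 + (0 < max_events t + changes E t.+1).
Proof.
apply/bigmax_leqP => [[a b]] _; apply: leq_trans (card_pending_succ t a b) _.
apply: leq_add; first by rewrite -!subn1 leq_sub2r // leq_add2r leq_max_pending.
case: (boolP (_ != set0)) => // /events_notified_gt0 ev_gt0.
by rewrite (leq_trans ev_gt0) // leq_add2r leq_max_events.
Qed.

Lemma max_pending_gt0 t a b : pending (state_at t a) b != set0 -> 0 < max_pending t.
Proof. by rewrite -card_gt0 => /leq_trans; apply; apply: leq_max_pending. Qed.

Lemma inconsistent_max_pending k t :
  round_inconsistent k (clique_alg n) E t.+1 -> 0 < max_pending t.+1.
Proof.
case/existsP => v /existsP [Q /andP [_ none]].
have : clique_answer (state_at t.+1 v) Q = None by exact/eqP.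
rewrite /clique_answer; case: ifP => // /negbFE /or3P [ev_sent | more | left_over] _.
- move: ev_sent; rewrite state_at_succ => /existsP [b /andP [+ /set0Pn [y yev]]].
  rewrite nbrs_notified inE => vb.
  have [y_kept | y_answered] := event_kept_or_answered vb yev.
    apply: (@max_pending_gt0 _ v b); apply/set0Pn; exists y.
    exact: subsetP (events_sub_pending _ _ _) _ y_kept.
  by apply: (@max_pending_gt0 _ b v); apply/set0Pn; exists y.
- move: more; rewrite state_at_succ => /existsP [u]; rewrite /msg_at.
  case: ifP => // uv; rewrite msg_more_report => more.
  apply: (@max_pending_gt0 _ u v); rewrite -card_gt0 pending_succ uv.
  apply: leq_trans (subset_leq_card (subsetUl _ _)).
  by rewrite card_pending_reported ?events_sub_pending_notified //; lia.
- by case/existsP: left_over => b /andP [_]; apply: max_pending_gt0.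
Qed.

Lemma inconsistent_rounds_bound k t :
  inconsistent_rounds k (clique_alg n) E t <= 3 * total_changes E t.
Proof.
have := potential_bound max_pending0 max_events0 max_events_succ max_pending_succ
  (@inconsistent_max_pending k) t.
exact: leq_trans (leq_addr _ _).
Qed.

End Execution.

Theorem corollary2 :
  forall k : nat, 3 <= k ->
  exists cB cR : nat, forall n : nat,
  exists A : dyn_alg n (cB * (trunc_log 2 n).+1),
  forall E : dyn_graph n, valid_dyn_graph E ->
    kclique_correct k A E /\
    (forall i : nat, inconsistent_rounds k A E i <= cR * total_changes E i).
Proof.
move=> k _; exists 5, 3 => n; exists (clique_alg n) => E HE; split.
  by move=> i v Q b vQ _; apply: clique_answer_correct.
exact: inconsistent_rounds_bound.
Qed.
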